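(* Let $L$ be recognized by a parity automaton with costs $\mathcal{A}$ over an alphabet $\Sigma_I\times\Sigma_O$ with $n$ states and $k$ colors. If Player $O$ wins $\Gamma_f(L)$ for some delay function $f$, then she also wins $\Gamma_f(L)$ for the constant delay function $f$ with $f(0)=2^{2n^4k^2+1}$.
   Context: A parity automaton with costs is a tuple $\mathcal{A}=(Q,\Sigma,q_I,\delta,\Omega,\mathrm{Cst})$ with a finite set $Q$ of states, a finite alphabet $\Sigma$, an initial state $q_I$, a deterministic complete transition function $\delta\colon Q\times\Sigma\to Q$, a coloring $\Omega\colon Q\to\mathbb{N}$, and a cost function $\mathrm{Cst}$ assigning to every transition $(q,a,\delta(q,a))$ either $\epsilon$ or $\mathtt{i}$ (increment-transition). Throughout, $\Omega(Q)$ contains both an even and an odd color; the number of colors is $|\Omega(Q)|$. The run on $a_0a_1\cdots$ is $(q_0,a_0,q_1)(q_1,a_1,q_2)\cdots$ with $q_0=q_I$, $q_{j+1}=\delta(q_j,a_j)$; the cost of a finite run is its number of increment-transitions. For odd $c$, $\mathrm{Ans}(c)=\{c'\in\Omega(Q)\mid c'>c,\ c'\text{ even}\}$. For an infinite run $\rho$ and $n$, $\mathrm{Cor}(\rho,n)=0$ if $\Omega(q_n)$ is even, and otherwise it is the minimal cost of $(q_n,a_n,q_{n+1})\cdots(q_{n'-1},a_{n'-1},q_{n'})$ over $n'>n$ with $\Omega(q_{n'})\in\mathrm{Ans}(\Omega(q_n))$ ($\min\emptyset=\infty$). The run is accepting if $\limsup_n\mathrm{Cor}(\rho,n)<\infty$;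 $L(\mathcal{A})$ is the set of infinite words whose run is accepting. A delay function is a map $f\colon\mathbb{N}\to\mathbb{N}\setminus\{0\}$; it is constant if $f(i)=1$ for every $i>0$. For $L\subseteq(\Sigma_I\times\Sigma_O)^\omega$, the delay game $\Gamma_f(L)$ is played in rounds $i=0,1,2,\ldots$: in round $i$, Player $I$ picks $u_i\in\Sigma_I^{f(i)}$, then Player $O$ picks $v_i\in\Sigma_O$. Player $O$ wins the play if the outcome, i.e., the word over $\Sigma_I\times\Sigma_O$ pairing $u_0u_1u_2\cdots$ and $v_0v_1v_2\cdots$ letterwise, is in $L$; otherwise Player $I$ wins. A strategy for Player $I$ is a map $\tau_I\colon\Sigma_O^*\to\Sigma_I^*$ with $|\tau_I(w)|=f(|w|)$; a strategy for Player $O$ is a map $\tau_O\colon\Sigma_I^*\to\Sigma_O$. A play is consistent with $\tau_I$ if $u_i=\tau_I(v_0\cdots v_{i-1})$ for all $i$, and with $\tau_O$ if $v_i=\tau_O(u_0\cdots u_i)$ for all $i$. A strategy is winning if every consistent play is won by its owner; a player wins the game if she has a winning strategy. *)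

From mathcomp Require Import all_boot.
Set Implicit Arguments. Unset Strict Implicit. Unset Printing Implicit Defensive.

(* Parity automaton with costs over alphabet Sigma, with state set Q.
   cst q a = true iff the transition (q, a, delta q a) is an increment-transition. *)
Record pac (Q Sigma : finType) := Pac {
  qI : Q;
  delta : Q -> Sigma -> Q;
  Omega : Q -> nat;
  cst : Q -> Sigma -> bool
}.

Section Auto.
Variables (Q Sigma : finType) (A : pac Q Sigma).

Definition nstates := #|Q|.
Definition ncolors := size (undup [seq Omega A q | q <- enum Q]).

Definition has_even_and_odd_color :=
  (exists q, odd (Omega A q)) /\ (exists q, ~~ odd (Omega A q)).

Fixpoint run_state (w : nat -> Sigma) (n : nat) : Q :=
  match n with
  | 0 => qI A
  | n'.+1 => delta A (run_state w n') (w n')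
  end.

Definition seg_cost (w : nat -> Sigma) (n n' : nat) : nat :=
  \sum_(n <= j < n') (cst A (run_state w j) (w j) : nat).

(* Cor(rho, n) <= b  (with min over the empty set = infinity) *)
Definition cor_le (w : nat -> Sigma) (n b : nat) : Prop :=
  ~~ odd (Omega A (run_state w n)) \/
  exists n', [/\ n < n', ~~ odd (Omega A (run_state w n')),
                 Omega A (run_state w n) < Omega A (run_state w n')
               & seg_cost w n n' <= b].

(* limsup_n Cor(rho, n) < infinity *)
Definition accepting (w : nat -> Sigma) : Prop :=
  exists b N, forall n, N <= n -> cor_le w n b.

Definition lang : (nat -> Sigma) -> Prop := accepting.
End Auto.

Definition delay_fun (f : nat -> nat) : Prop := forall i, 0 < f i.
Definition constant_delay (f : nat -> nat) : Prop := forall i, 0 < i -> f i = 1.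

Section Game.
Variables (SI SO : finType).

(* w is the outcome of the play (u_i, v_i)_i : the word pairing u_0 u_1 ... with
   v_0 v_1 ... letterwise.  (The first j+1 blocks contain at least j+1 letters,
   since every block is nonempty; the default of nth is irrelevant.) *)
Definition outcome (u : nat -> seq SI) (v : nat -> SO) (w : nat -> SI * SO) : Prop :=
  forall j, (w j).2 = v j /\
            (w j).1 = nth (w j).1 (flatten [seq u l | l <- iota 0 j.+1]) j.

Definition winsO (f : nat -> nat) (L : (nat -> SI * SO) -> Prop) : Prop :=
  exists tauO : seq SI -> SO,
    forall (u : nat -> seq SI) (v : nat -> SO),
      (forall i, size (u i) = f i) ->
      (forall i, v i = tauO (flatten [seq u l | l <- iota 0 i.+1])) ->
      forall w, outcome u v w -> L w.
End Game.

From mathcomp Require Import all_boot zify.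
From Stdlib Require Import ClassicalEpsilon.
Set Implicit Arguments. Unset Strict Implicit. Unset Printing Implicit Defensive.

(* A run segment is summarised by its last state, whether it takes an
   increment-transition, its highest request (odd colour) left unanswered
   inside the segment, and its highest even colour.  The profile of an input
   word x is the set of pairs (start state, summary) that Player O can realise
   by choosing the outputs for x; there are at most l := 2^(2 n^4 k^2) profiles,
   so every input block of length l has the profile of arbitrarily long words.
   With lookahead 2l, Player O cuts the input into blocks of length l, replaces
   each block by a word of the same profile that is long enough to absorb the
   delay of a given winning strategy tau for f, simulates tau on these pumped
   blocks, and answers every real block with outputs realising the summary of
   the corresponding simulated block.  Both runs then pass through the same
   summaries block by block, so a request pending at the end of a real block
   is answered in the real run inside the block where the simulated run
   answers it, at cost at most l times (simulated cost + 2). *)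

Section FlattenIota.
Variables (T : Type) (F : nat -> seq T).
Local Notation prefix n := (flatten [seq F t | t <- iota 0 n]).

Lemma flatten_iotaS n : prefix n.+1 = prefix n ++ F n.
Proof. by rewrite -addn1 iotaD map_cat flatten_cat /= cats0. Qed.

Lemma flatten_iota_prefix m n : m <= n -> exists r, prefix n = prefix m ++ r.
Proof. by move=> /subnKC <-; rewrite iotaD map_cat flatten_cat; eexists. Qed.

Lemma nth_flatten_iota x0 m n p :
  m <= n -> p < size (prefix m) -> nth x0 (prefix n) p = nth x0 (prefix m) p.
Proof. by move=> /flatten_iota_prefix[r ->] lt_p; rewrite nth_cat lt_p. Qed.

End FlattenIota.

Lemma increasing_cover (P : nat -> nat) :
  P 0 = 0 -> (forall n, P n < P n.+1) -> forall p, exists i, P i <= p < P i.+1.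
Proof.
move=> P0 incrP; elim=> [|p [i /andP[le_ip lt_pi]]]; first by exists 0; have := incrP 0; rewrite P0.
have [lt_p1|eq_p1] : p.+1 < P i.+1 \/ p.+1 = P i.+1 by lia.
  by exists i; rewrite lt_p1 andbT leqW.
by exists i.+1; rewrite eq_p1 leqnn incrP.
Qed.

Section Run.
Variables (Sig Q : finType) (A : pac Q Sig) (w : nat -> Sig).

Lemma seg_cost_cat a b c :
  a <= b -> b <= c -> seg_cost A w a c = seg_cost A w a b + seg_cost A w b c.
Proof. exact: big_cat_nat. Qed.

Lemma leq_seg_cost a b a' b' :
  a' <= a -> a <= b -> b <= b' -> seg_cost A w a b <= seg_cost A w a' b'.
Proof.
move=> le_a'a le_ab le_bb'.
rewrite (seg_cost_cat le_a'a (leq_trans le_ab le_bb')) (seg_cost_cat le_ab le_bb').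
by rewrite addnC -addnA leq_addr.
Qed.

Lemma seg_cost_le_length a b : seg_cost A w a b <= b - a.
Proof.
rewrite -[b - a]muln1 -sum_nat_const_nat.
by apply: leq_sum => j _; apply: leq_b1.
Qed.

Lemma run_state_foldl n :
  run_state A w n = foldl (delta A) (qI A) [seq w t | t <- iota 0 n].
Proof. by elim: n => [|n IH] //; rewrite -[in RHS]addn1 iotaD map_cat foldl_cat -IH. Qed.

End Run.

(* last state, increment seen, highest open request, highest even state *)
Notation summary Q := (Q * bool * option Q * option Q)%type.

Section Summary.
Variables (Sig Q : finType) (A : pac Q Sig).
Local Notation Om := (Omega A).

Definition summary_init (q : Q) : summary Q := (q, false, None, None).

Definition summary_step (s : summary Q) (a : Sig) : summary Q :=
  let: (q, incr, P, E) := s in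
  let c := Om q in
  (delta A q a, incr || cst A q a,
   if odd c then (if P is Some p then (if c < Om p then Some p else Some q) else Some q)
   else (if P is Some p then (if Om p < c then None else Some p) else None),
   if odd c then E else (if E is Some e then (if c < Om e then Some e else Some q) else Some q)).

Definition last_state (s : summary Q) := let: (q, _, _, _) := s in q.
Definition has_incr (s : summary Q) := let: (_, incr, _, _) := s in incr.
Definition pending (s : summary Q) := let: (_, _, P, _) := s in P.
Definition max_even (s : summary Q) := let: (_, _, _, E) := s in E.

Variable w : nat -> Sig.
Local Notation rs := (run_state A w).

Definition block_summary a d :=
  foldl summary_step (summary_init (rs a)) [seq w t | t <- iota a d].

Lemma block_summaryS a d :
  block_summary a d.+1 = summary_step (block_summary a d) (w (a + d)).
Proof. by rewrite /block_summary -addn1 iotaD map_cat foldl_cat. Qed.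

Lemma last_state_block_summary a d : last_state (block_summary a d) = rs (a + d).
Proof.
elim: d => [|d IH]; first by rewrite addn0.
rewrite block_summaryS addnS /=; move: IH.
by case: (block_summary a d) => [[[q incr] P] E] /= <-.
Qed.

Lemma has_incr_block_summary a d :
  has_incr (block_summary a d) = (0 < seg_cost A w a (a + d)).
Proof.
elim: d => [|d IH]; first by rewrite addn0 /seg_cost big_geq.
rewrite block_summaryS addnS /seg_cost big_nat_recr ?leq_addr //= addn_gt0 -/(seg_cost _ _ _ _).
rewrite -IH -last_state_block_summary.
by case: (block_summary a d) => [[[q incr] P] E] /=; rewrite lt0b.
Qed.

Lemma seg_cost_le_sum_incr_blocks l a b :
  seg_cost A w (a * l) (b * l) <= l * \sum_(a <= j < b) has_incr (block_summary (j * l) l).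
Proof.
elim: b => [|b IH]; first by rewrite /seg_cost big_geq.
have [le_ab|lt_ba] := leqP a b; last by rewrite /seg_cost big_geq // leq_mul2r lt_ba orbT.
rewrite big_nat_recr //= mulnDr mulSnr (seg_cost_cat _ _ (leq_mul le_ab (leqnn l)) (leq_addr l _)).
rewrite leq_add // has_incr_block_summary.
have := seg_cost_le_length A w (b * l) (b * l + l); rewrite addKn.
by case: (seg_cost _ _ _ _) => //= c; rewrite muln1.
Qed.

Lemma sum_incr_blocks_le_seg_cost (P : nat -> nat) a b :
  {homo P : m n / m <= n} ->
  \sum_(a <= j < b) has_incr (block_summary (P j) (P j.+1 - P j)) <= seg_cost A w (P a) (P b).
Proof.
move=> homoP; elim: b => [|b IH]; first by rewrite big_geq.
have [le_ab|lt_ba] := leqP a b; last by rewrite big_geq.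
rewrite big_nat_recr //= (seg_cost_cat _ _ (homoP _ _ le_ab) (homoP _ _ (leqnSn b))).
by rewrite leq_add // has_incr_block_summary subnKC ?homoP //; case: (seg_cost _ _ _ _).
Qed.

Lemma max_even_block_summary_witness a d e :
  max_even (block_summary a d) = Some e ->
  exists2 t, a <= t < a + d & Om (rs t) = Om e /\ ~~ odd (Om e).
Proof.
elim: d => [|d IH] //; have := last_state_block_summary a d.
rewrite block_summaryS; move: IH.
case: (block_summary a d) => [[[q incr] P] E] /= IH ->.
have widen t : a <= t < a + d -> a <= t < a + d.+1 by lia.
case: ifP => [_ /IH [t /widen]|q_even]; first by exists t.
have last_even : exists2 t, a <= t < a + d.+1 &
    Om (rs t) = Om (rs (a + d)) /\ ~~ odd (Om (rs (a + d))).
  by exists (a + d); [lia | rewrite q_even].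
case: E IH => [e0|] IH; last by case=> <-.
case: ifP => _ [e0e]; subst e; last exact: last_even.
by have [t /widen] := IH erefl; exists t.
Qed.

Lemma max_even_block_summary_complete a d t :
  a <= t < a + d -> ~~ odd (Om (rs t)) ->
  exists2 e, max_even (block_summary a d) = Some e & Om (rs t) <= Om e.
Proof.
elim: d => [|d IH] t_in t_even; first lia.
have := last_state_block_summary a d; rewrite block_summaryS; move: IH.
case: (block_summary a d) => [[[q incr] P] E] /= IH ->.
have [lt_t|t_last] : t < a + d \/ t = a + d by lia.
  have [e -> le_te] := IH (ltac:(lia)) t_even.
  case: ifP => _; first by exists e.
  by case: ifP => lt; [exists e | exists (rs (a + d))] => //; lia.
subst t; rewrite (negbTE t_even); case: E {IH} => [e|]; last by exists (rs (a + d)).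
by case: ifP => lt; [exists e | exists (rs (a + d))] => //; lia.
Qed.

Definition open_request t b :=
  odd (Om (rs t)) /\
  forall t', t < t' < b -> ~~ odd (Om (rs t')) -> Om (rs t') <= Om (rs t).

Lemma open_request_self t : odd (Om (rs t)) -> open_request t t.+1.
Proof. by split=> // t'; lia. Qed.

Lemma open_requestS t b :
  open_request t b -> (~~ odd (Om (rs b)) -> Om (rs b) <= Om (rs t)) ->
  open_request t b.+1.
Proof.
move=> [odd_t later] le_b; split=> // t' t'_in.
have [lt_t'|->] : t' < b \/ t' = b by lia.
  by apply: later; lia.
exact: le_b.
Qed.

Lemma pending_block_summary_witness a d p :
  pending (block_summary a d) = Some p ->
  exists2 t, a <= t < a + d & Om (rs t) = Om p /\ open_request t (a + d).
Proof.
elim: d p => [|d IH] p //; have := last_state_block_summary a d.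
rewrite block_summaryS addnS; move: IH.
case: (block_summary a d) => [[[q incr] P] E] /= IH ->.
have extend p0 : P = Some p0 ->
    (~~ odd (Om (rs (a + d))) -> Om (rs (a + d)) <= Om p0) ->
    exists2 t, a <= t < (a + d).+1 & Om (rs t) = Om p0 /\ open_request t (a + d).+1.
  move=> /IH [t t_in [Om_t open_t]] le_last; exists t; first lia.
  by split=> //; apply: open_requestS; rewrite ?Om_t.
case: ifP => odd_last.
  have fresh : exists2 t, a <= t < (a + d).+1 &
      Om (rs t) = Om (rs (a + d)) /\ open_request t (a + d).+1.
    by exists (a + d); [lia | split=> //; apply: open_request_self].
  case: P {IH} extend => [p0|] extend; last by case=> <-.
  case: ifP => _ [<-]; last exact: fresh.
  by apply: extend => //; rewrite odd_last.
case: P {IH} extend => [p0|] extend //.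
by case: ifP => // /negbT; rewrite -leqNgt => le_last [<-]; apply: extend.
Qed.

Lemma pending_block_summary_complete a d t :
  a <= t < a + d -> odd (Om (rs t)) ->
  (exists t', [/\ t < t' < a + d, ~~ odd (Om (rs t')) & Om (rs t) < Om (rs t')]) \/
  exists2 p, pending (block_summary a d) = Some p & Om (rs t) <= Om p.
Proof.
elim: d => [|d IH] t_in t_odd; first lia.
have := last_state_block_summary a d; rewrite block_summaryS addnS; move: IH.
case: (block_summary a d) => [[[q incr] P] E] /= IH ->.
have [lt_t|t_last] : t < a + d \/ t = a + d by lia.
  case: (IH (ltac:(lia)) t_odd) => [[t' [t'_in t'_even lt_t']]|[p -> le_tp]].
    by left; exists t'; split => //; lia.
  case: ifP => odd_last; case: ifP => lt_last.
  - by right; exists p.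
  - by right; exists (rs (a + d)) => //; lia.
  - by left; exists (a + d); split => //; [lia | rewrite odd_last | lia].
  - by right; exists p.
subst t; rewrite t_odd; right; case: P {IH} => [p|]; last by exists (rs (a + d)).
by case: ifP => lt; [exists p | exists (rs (a + d))] => //; lia.
Qed.

Lemma open_request_answered_later (P : nat -> nat) i n b :
  P 0 = 0 -> (forall k, P k < P k.+1) ->
  P i <= n < P i.+1 -> open_request n (P i.+1) -> cor_le A w n b ->
  exists n' i', [/\ i < i', P i' <= n' < P i'.+1, ~~ odd (Om (rs n')),
                    Om (rs n) < Om (rs n') & seg_cost A w n n' <= b].
Proof.
move=> P0 incrP n_in [odd_n open_n] [|[n' [lt_nn' even_n' lt_Om cost]]].
  by rewrite odd_n.
have [i' n'_in] := increasing_cover P0 incrP n'.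
have monoP := leqW_mono (leq_mono (homo_ltn ltn_trans incrP)).
have late_n' : P i.+1 <= n'.
  rewrite leqNgt; apply/negP => early.
  by have := open_n n' (ltac:(lia)) even_n'; rewrite leqNgt lt_Om.
by exists n', i'; split=> //; rewrite -ltnS -monoP; lia.
Qed.

End Summary.

Section Profile.
Variables (SI SO Q : finType) (A : pac Q (SI * SO)%type).

Definition profile (x : seq SI) : {set Q * summary Q} :=
  [set p | [exists ys : (size x).-tuple SO,
              foldl (summary_step A) (summary_init p.1) (zip x ys) == p.2]].

Lemma profileP x q s :
  reflect (exists2 ys : seq SO, size ys = size x &
             foldl (summary_step A) (summary_init q) (zip x ys) = s)
          ((q, s) \in profile x).
Proof.
rewrite inE; apply: (iffP existsP) => [[ys /eqP realise]|[ys size_ys realise]].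
  by exists ys; rewrite ?size_tuple.
by exists (tcast size_ys (in_tuple ys)); rewrite val_tcast realise.
Qed.

Lemma profile_catP x z q s :
  reflect (exists2 s1, (q, s1) \in profile x &
             exists2 ys, size ys = size z & foldl (summary_step A) s1 (zip z ys) = s)
          ((q, s) \in profile (x ++ z)).
Proof.
apply: (iffP (profileP _ _ _)) => [[ys size_ys <-]|[s1 /profileP[ys1 size1 <-] [ys2 size2 <-]]].
  have size_take : size (take (size x) ys) = size x.
    by rewrite size_takel // size_ys size_cat leq_addr.
  exists (foldl (summary_step A) (summary_init q) (zip x (take (size x) ys))).
    by apply/profileP; exists (take (size x) ys).
  exists (drop (size x) ys); first by rewrite size_drop size_ys size_cat addKn.
  by rewrite -foldl_cat -zip_cat ?cat_take_drop.
exists (ys1 ++ ys2); first by rewrite !size_cat size1 size2.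
by rewrite zip_cat // foldl_cat.
Qed.

Lemma profile_catl x x' z : profile x = profile x' -> profile (x ++ z) = profile (x' ++ z).
Proof.
by move=> eq_x; apply/setP => -[q s]; apply/profile_catP/profile_catP; rewrite eq_x.
Qed.

(* Between two prefixes of equal profile lies a factor that can be repeated. *)
Lemma profile_pump x i j :
  i < j <= size x -> profile (take i x) = profile (take j x) ->
  forall N, exists y, profile y = profile x /\ N <= size y.
Proof.
move=> /andP[lt_ij le_jx] eq_ij N.
set a := take i x; set b := take (j - i) (drop i x); set c := drop j x.
have take_j : take j x = a ++ b by rewrite /a /b -takeD subnKC // ltnW.
have x_abc : x = (a ++ b) ++ c by rewrite -take_j cat_take_drop.
have loop : profile (a ++ b) = profile a by rewrite -take_j eq_ij.
have loops k : profile (a ++ flatten (nseq k b)) = profile a.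
  by elim: k => [|k IH]; rewrite ?cats0 //= catA (profile_catl _ loop).
exists ((a ++ flatten (nseq N b)) ++ c); split.
  by rewrite (profile_catl _ (loops N)) [in RHS]x_abc (profile_catl _ loop).
have b_gt0 : 0 < size b by rewrite /b size_take size_drop; case: ifP; lia.
rewrite !size_cat size_flatten /shape map_nseq sumn_nseq.
by apply: leq_trans (leq_addr _ _); apply: leq_trans (leq_addl _ _); apply: leq_pmull.
Qed.

Lemma long_word_same_profile x :
  #|{set Q * summary Q}| <= size x ->
  forall N, exists y, profile y = profile x /\ N <= size y.
Proof.
move=> many_letters.
pose prefix_profile (j : 'I_(size x).+1) := profile (take j x).
have /injectivePn[i [j neq_ij eq_ij]] : ~~ injectiveb prefix_profile.
  apply/injectiveP => /leq_card; rewrite card_ord => /leq_trans/(_ many_letters).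
  by rewrite ltnn.
have := ltn_ord i; have := ltn_ord j; rewrite !ltnS => le_j le_i.
case: (ltngtP i j) => [lt_ij|lt_ji|/val_inj eq_ij']; last by rewrite eq_ij' eqxx in neq_ij.
- by apply: (profile_pump (i := i) (j := j)); rewrite ?lt_ij.
- by apply: (profile_pump (i := j) (j := i)); rewrite ?lt_ji.
Qed.

Lemma card_profiles :
  #|{set Q * summary Q}| = 2 ^ (#|Q| * (#|Q| * 2 * #|Q|.+1 * #|Q|.+1)).
Proof.
have := card_powerset [set: Q * summary Q]; rewrite powersetT !cardsT => ->.
by rewrite !card_prod card_bool !card_option.
Qed.

End Profile.

Section Strategy.
Variables (SI SO Q : finType) (A : pac Q (SI * SO)%type).
Variables (f : nat -> nat) (tau : seq SI -> SO) (l : nat).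

Definition letters_before n := \sum_(t < n) f t.

Definition pump_to (x : seq SI) (N : nat) : seq SI :=
  epsilon (inhabits x) (fun y => profile A y = profile A x /\ N <= size y).

(* Block [k.+1] is pumped beyond the input that [tau] reads before answering
   the last letter of blocks [0 .. k], so that these answers only depend on
   the blocks [0 .. k.+1]. *)
Fixpoint pumped_blocks (B : nat -> seq SI) k : seq (seq SI) :=
  if k is k'.+1 then
    rcons (pumped_blocks B k')
          (pump_to (B k) (letters_before (size (flatten (pumped_blocks B k')))).+1)
  else [:: B 0].

Definition pumped B i := nth [::] (pumped_blocks B i) i.
Definition pumped_start B n := size (flatten [seq pumped B t | t <- iota 0 n]).

Definition sim_letter (x0 : SI) (L : seq SI) p :=
  (nth x0 L p, tau (take (letters_before p.+1) L)).

(* [q] and [s] are the state reached before, and the summary of, the pumped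
   block [i] in the play where Player I plays the pumped blocks and Player O
   follows [tau]; the answer realises [s] from [q] on the original block. *)
Definition block_answer B x0 i : seq SO :=
  let L := flatten (pumped_blocks B i.+1) in
  let q := foldl (delta A) (qI A)
             [seq sim_letter x0 L p | p <- iota 0 (pumped_start B i)] in
  let s := foldl (summary_step A) (summary_init q)
             [seq sim_letter x0 L p | p <- iota (pumped_start B i) (size (pumped B i))] in
  epsilon (inhabits [::]) (fun ys : seq SO =>
    size ys = size (B i) /\ foldl (summary_step A) (summary_init q) (zip (B i) ys) = s).

Definition block (s : seq SI) t := take l (drop (t * l) s).

(* With lookahead [2 l], the blocks [0 .. j %/ l + 1] are known when letter
   [j] is answered. *)
Definition block_strategy (s : seq SI) : SO :=
  if s is x0 :: _ then
    let j := size s - 2 * l in nth (tau [::]) (block_answer (block s) x0 (j %/ l)) (j %% l)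
  else tau [::].

Lemma letters_beforeS n : letters_before n.+1 = letters_before n + f n.
Proof. by rewrite /letters_before big_ord_recr. Qed.

Lemma homo_letters_before : {homo letters_before : m n / m <= n}.
Proof.
have step n : letters_before n <= letters_before n.+1 by rewrite letters_beforeS leq_addr.
exact: homo_leq leqnn leq_trans step.
Qed.

Lemma flatten_rounds (T : Type) (X : nat -> T) n :
  flatten [seq [seq X p | p <- iota (letters_before t) (f t)] | t <- iota 0 n] =
  mkseq X (letters_before n).
Proof.
elim: n => [|n IH]; first by rewrite /letters_before big_ord0.
by rewrite flatten_iotaS IH letters_beforeS /mkseq iotaD map_cat.
Qed.

Lemma pump_toP x N :
  #|{set Q * summary Q}| <= size x ->
  profile A (pump_to x N) = profile A x /\ N <= size (pump_to x N).
Proof. by move=> /long_word_same_profile/(_ N)/epsilon_spec; apply. Qed.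

Lemma block_mkseq (X : nat -> SI) n t :
  t.+1 * l <= n -> block (mkseq X n) t = [seq X p | p <- iota (t * l) l].
Proof.
rewrite /block /mkseq -map_drop -map_take drop_iota take_iota add0n mulSn => le_n.
by congr (map _ (iota _ _)); lia.
Qed.

Lemma size_pumped_blocks B k : size (pumped_blocks B k) = k.+1.
Proof. by elim: k => [|k IH] //=; rewrite size_rcons IH. Qed.

Lemma pumped_blocksS B k : pumped_blocks B k.+1 = rcons (pumped_blocks B k) (pumped B k.+1).
Proof.
by rewrite /pumped {2}/pumped_blocks -/pumped_blocks nth_rcons size_pumped_blocks ltnn eqxx.
Qed.

Lemma pumped_blocksE B k : pumped_blocks B k = [seq pumped B t | t <- iota 0 k.+1].
Proof.
by elim: k => [|k IH] //; rewrite pumped_blocksS IH -[k.+2]addn1 iotaD map_cat cats1.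
Qed.

Lemma pumped_startS B n : pumped_start B n.+1 = pumped_start B n + size (pumped B n).
Proof. by rewrite /pumped_start flatten_iotaS size_cat. Qed.

Lemma size_flatten_pumped_blocks B k :
  size (flatten (pumped_blocks B k)) = pumped_start B k.+1.
Proof. by rewrite pumped_blocksE. Qed.

Lemma eq_pumped_blocks B B' k :
  (forall t, t <= k -> B t = B' t) -> pumped_blocks B k = pumped_blocks B' k.
Proof.
elim: k => [|k IH] eqB /=; first by rewrite eqB.
by rewrite IH ?eqB // => t le_tk; apply: eqB; apply: leqW.
Qed.

Lemma eq_block_answer B B' x0 i :
  (forall t, t <= i.+1 -> B t = B' t) -> block_answer B x0 i = block_answer B' x0 i.
Proof.
move=> eqB; have eqB' t : t <= i -> B t = B' t by move=> le_ti; apply/eqB/leqW.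
have eq_pumped t : t <= i -> pumped B t = pumped B' t.
  by move=> le_ti; rewrite /pumped (@eq_pumped_blocks B B') // => t' /leq_trans/(_ le_ti)/eqB'.
have eq_start : pumped_start B i = pumped_start B' i.
  rewrite /pumped_start; congr (size (flatten _)); apply/eq_in_map => t.
  by rewrite mem_iota => /andP[_ /ltnW /eq_pumped].
by rewrite /block_answer (eq_pumped_blocks eqB) eq_start eq_pumped ?eqB.
Qed.

End Strategy.

Section Simulation.
Variables (SI SO Q : finType) (A : pac Q (SI * SO)%type).
Variables (f : nat -> nat) (tau : seq SI -> SO) (l : nat).
Hypothesis f_pos : delay_fun f.
Hypothesis l_large : #|{set Q * summary Q}| <= l.
Variable B : nat -> seq SI.
Hypothesis size_B : forall t, size (B t) = l.

Local Notation letters_before := (letters_before f).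
Local Notation pumped_blocks := (pumped_blocks A f B).
Local Notation pumped := (pumped A f B).
Local Notation pumped_start := (pumped_start A f B).

Lemma l_gt0 : 0 < l.
Proof. by apply: leq_trans l_large; apply/card_gt0P; exists set0. Qed.

Lemma letters_before_ge n : n <= letters_before n.
Proof. by elim: n => // n IH; rewrite letters_beforeS -addn1 (leq_add IH (f_pos n)). Qed.

Lemma pumpedS k :
  pumped k.+1 = pump_to A (B k.+1) (letters_before (pumped_start k.+1)).+1.
Proof.
by rewrite /pumped /= nth_rcons size_pumped_blocks ltnn eqxx size_flatten_pumped_blocks.
Qed.

Lemma large_blocks t : #|{set Q * summary Q}| <= size (B t).
Proof. by rewrite size_B. Qed.

Lemma profile_pumped t : profile A (pumped t) = profile A (B t).
Proof. by case: t => // k; rewrite pumpedS; exact: (proj1 (pump_toP A _ (large_blocks _))). Qed.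

Lemma long_pumped k : letters_before (pumped_start k.+1) < size (pumped k.+1).
Proof. by rewrite pumpedS; exact: (proj2 (pump_toP A _ (large_blocks _))). Qed.

Lemma pumped_gt0 t : 0 < size (pumped t).
Proof.
case: t => [|k]; first by rewrite /pumped /= size_B l_gt0.
exact: leq_ltn_trans (long_pumped k).
Qed.

Lemma pumped_start_lt n : pumped_start n < pumped_start n.+1.
Proof. by rewrite pumped_startS -addn1 leq_add2l pumped_gt0. Qed.

Lemma leq_pumped_start : {mono pumped_start : m n / m <= n}.
Proof. exact: leq_mono (homo_ltn ltn_trans pumped_start_lt). Qed.

Lemma pumped_start_ge n : n <= pumped_start n.
Proof. by elim: n => // n IH; apply: leq_ltn_trans IH (pumped_start_lt n). Qed.

(* The blocks [0 .. p] already contain more than [p] letters. *)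
Definition pumped_input x0 p := nth x0 (flatten (pumped_blocks p)) p.

Lemma nth_pumped_blocks x0 k p :
  p < size (flatten (pumped_blocks k)) -> nth x0 (flatten (pumped_blocks k)) p = pumped_input x0 p.
Proof.
have p_in : p < size (flatten (pumped_blocks p)).
  by rewrite size_flatten_pumped_blocks pumped_start_ge.
rewrite /pumped_input !pumped_blocksE in p_in * => lt_p.
have [le_kp|lt_pk] := leqP k p; first by rewrite (nth_flatten_iota _ (m := k.+1)).
by rewrite (nth_flatten_iota _ (m := p.+1)) // leqW.
Qed.

Lemma take_pumped_blocks x0 k n :
  n <= size (flatten (pumped_blocks k)) ->
  take n (flatten (pumped_blocks k)) = mkseq (pumped_input x0) n.
Proof.
move=> le_n; apply: (@eq_from_nth _ x0); first by rewrite size_takel // size_mkseq.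
move=> i; rewrite size_takel // => lt_i.
by rewrite nth_take // nth_mkseq // nth_pumped_blocks // (leq_trans lt_i).
Qed.

Lemma pumped_input_block x0 i r :
  r < size (pumped i) -> pumped_input x0 (pumped_start i + r) = nth x0 (pumped i) r.
Proof.
move=> lt_r; rewrite -(nth_pumped_blocks x0 (k := i)); last first.
  by rewrite size_flatten_pumped_blocks pumped_startS ltn_add2l.
by rewrite pumped_blocksE flatten_iotaS nth_cat -/(pumped_start i) ltnNge leq_addr /= addKn.
Qed.

Definition simulated_play x0 p :=
  (pumped_input x0 p, tau (mkseq (pumped_input x0) (letters_before p.+1))).

Lemma sim_letter_simulated_play x0 i p :
  p < pumped_start i.+1 ->
  sim_letter f tau x0 (flatten (pumped_blocks i.+1)) p = simulated_play x0 p.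
Proof.
move=> lt_p.
have size_L : size (flatten (pumped_blocks i.+1)) = pumped_start i.+2.
  exact: size_flatten_pumped_blocks.
have lt_L := pumped_start_lt i.+1.
rewrite /sim_letter /simulated_play nth_pumped_blocks ?size_L ?(ltn_trans lt_p) //.
rewrite (take_pumped_blocks x0) // size_L pumped_startS.
rewrite (leq_trans (homo_letters_before f lt_p)) //.
by rewrite (leq_trans (ltnW (long_pumped i))) // leq_addl.
Qed.

Lemma block_answer_spec x0 i :
  size (block_answer A f tau B x0 i) = l /\
  foldl (summary_step A) (summary_init (run_state A (simulated_play x0) (pumped_start i)))
        (zip (B i) (block_answer A f tau B x0 i)) =
  block_summary A (simulated_play x0) (pumped_start i) (size (pumped i)).
Proof.
have end_i : pumped_start i + size (pumped i) = pumped_start i.+1 by rewrite pumped_startS.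
set L := flatten (pumped_blocks i.+1).
have sim_q : foldl (delta A) (qI A) [seq sim_letter f tau x0 L p | p <- iota 0 (pumped_start i)] =
             run_state A (simulated_play x0) (pumped_start i).
  rewrite run_state_foldl; congr foldl; apply/eq_in_map => p; rewrite mem_iota => /andP[_ lt_p].
  exact/sim_letter_simulated_play/(ltn_trans lt_p)/pumped_start_lt.
set q := run_state A (simulated_play x0) (pumped_start i).
set block_i := [seq simulated_play x0 p | p <- iota (pumped_start i) (size (pumped i))].
have sim_s : [seq sim_letter f tau x0 L p | p <- iota (pumped_start i) (size (pumped i))] = block_i.
  apply/eq_in_map => p; rewrite mem_iota end_i => /andP[_ lt_p].
  exact: sim_letter_simulated_play.
have inputs_i : unzip1 block_i = pumped i.
  apply: (@eq_from_nth _ x0); rewrite /unzip1 /block_i -map_comp size_map size_iota // => r lt_r.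
  by rewrite (nth_map 0) ?size_iota // nth_iota //= pumped_input_block.
have : (q, block_summary A (simulated_play x0) (pumped_start i) (size (pumped i)))
         \in profile A (B i).
  rewrite -profile_pumped; apply/profileP; exists (unzip2 block_i).
    by rewrite -inputs_i !size_map.
  by rewrite -[in zip _ _]inputs_i zip_unzip.
move=> /profileP[ys size_ys realise].
rewrite /block_answer sim_q sim_s.
have [] := epsilon_spec (inhabits [::]) (fun ys : seq SO => size ys = size (B i) /\
  foldl (summary_step A) (summary_init q) (zip (B i) ys) =
  block_summary A (simulated_play x0) (pumped_start i) (size (pumped i))).
  by exists ys.
by rewrite size_B => -> ->.
Qed.

Hypothesis tau_wins : forall (u : nat -> seq SI) (v : nat -> SO),
  (forall i, size (u i) = f i) ->
  (forall i, v i = tau (flatten [seq u t | t <- iota 0 i.+1])) ->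
  forall w, outcome u v w -> lang A w.

Lemma simulated_play_accepted x0 : lang A (simulated_play x0).
Proof.
apply: (tau_wins (u := fun t => [seq pumped_input x0 p | p <- iota (letters_before t) (f t)])).
- by move=> i; rewrite size_map size_iota.
- by move=> i; rewrite flatten_rounds.
- by move=> j; split=> //; rewrite flatten_rounds nth_mkseq // letters_before_ge.
Qed.
End Simulation.

Section BlockStrategy.
Variables (SI SO Q : finType) (A : pac Q (SI * SO)%type).
Variables (f : nat -> nat) (tau : seq SI -> SO) (l : nat).
Hypothesis f_pos : delay_fun f.
Hypothesis tau_wins : forall (u : nat -> seq SI) (v : nat -> SO),
  (forall i, size (u i) = f i) ->
  (forall i, v i = tau (flatten [seq u t | t <- iota 0 i.+1])) ->
  forall w, outcome u v w -> lang A w.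
Hypothesis l_large : #|{set Q * summary Q}| <= l.
Variables (g : nat -> nat) (u : nat -> seq SI) (v : nat -> SO) (w : nat -> SI * SO).
Hypothesis g0 : g 0 = 2 * l.
Hypothesis g_const : constant_delay g.
Hypothesis size_u : forall i, size (u i) = g i.
Hypothesis v_strategy :
  forall i, v i = block_strategy A f tau l (flatten [seq u t | t <- iota 0 i.+1]).
Hypothesis w_outcome : outcome u v w.

Local Notation prefix j := (flatten [seq u t | t <- iota 0 j.+1]).
Local Notation input j := (w j).1.

Lemma size_prefix j : size (prefix j) = 2 * l + j.
Proof.
elim: j => [|j IH]; first by rewrite /= cats0 size_u g0 addn0.
by rewrite flatten_iotaS size_cat IH size_u g_const // addn1 addnS.
Qed.

Lemma prefixE j : prefix j = mkseq (fun t => input t) (2 * l + j).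
Proof.
apply: (@eq_from_nth _ (input 0)); first by rewrite size_prefix size_mkseq.
move=> t; rewrite size_prefix => lt_t; rewrite nth_mkseq //.
have t_in : t < size (prefix t) by rewrite size_prefix; have := l_gt0 l_large; lia.
have [le_tj|lt_jt] := leqP t j.
  by rewrite (nth_flatten_iota _ (m := t.+1)) // (w_outcome t).2; apply: set_nth_default.
rewrite (w_outcome t).2 (nth_flatten_iota _ (m := j.+1) (n := t.+1)) ?size_prefix //.
  by apply: set_nth_default; rewrite size_prefix.
exact: ltnW.
Qed.

Definition real_block t := [seq input p | p <- iota (t * l) l].

Lemma size_real_block t : size (real_block t) = l.
Proof. by rewrite size_map size_iota. Qed.

Local Notation answer := (block_answer A f tau real_block (input 0)).
Local Notation sim := (simulated_play A f tau real_block (input 0)).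
Local Notation start := (pumped_start A f real_block).
Local Notation pblock := (pumped A f real_block).

Lemma v_block_answer j : v j = nth (tau [::]) (answer (j %/ l)) (j %% l).
Proof.
have l_pos := l_gt0 l_large.
rewrite v_strategy prefixE; set s := mkseq _ _.
have s_cons : s = input 0 :: behead s by rewrite /s (_ : 2 * l + j = (2 * l + j).-1.+1) //; lia.
rewrite s_cons /block_strategy -s_cons size_mkseq addKn.
congr nth; apply: eq_block_answer => t le_t; apply: block_mkseq.
by have := leq_divM j l; nia.
Qed.

Lemma outcome_letter p : w p = (input p, v p).
Proof. by rewrite -(w_outcome p).1; case: (w p). Qed.

Lemma real_block_play i : [seq w p | p <- iota (i * l) l] = zip (real_block i) (answer i).
Proof.
have l_pos := l_gt0 l_large.
have [size_ans _] := block_answer_spec A f tau l_large size_real_block (input 0) i.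
apply: (@eq_from_nth _ (input 0, v 0)).
  by rewrite size_map size_iota size_zip size_real_block size_ans minnn.
move=> r; rewrite size_map size_iota => lt_r.
rewrite (nth_map 0) ?size_iota // nth_iota // nth_zip ?size_real_block ?size_ans //.
rewrite outcome_letter v_block_answer (nth_map 0) ?size_iota // nth_iota //.
rewrite divnMDl // modnMDl divn_small // modn_small // addn0.
by congr pair; apply: set_nth_default; rewrite size_ans.
Qed.

Lemma real_sim_block_summary i :
  run_state A w (i * l) = run_state A sim (start i) /\
  block_summary A w (i * l) l = block_summary A sim (start i) (size (pblock i)).
Proof.
have same_block k : run_state A w (k * l) = run_state A sim (start k) ->
    block_summary A w (k * l) l = block_summary A sim (start k) (size (pblock k)).
  move=> same_start; have [_ <-] := block_answer_spec A f tau l_large size_real_block (input 0) k.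
  by rewrite /block_summary real_block_play same_start.
elim: i => [|i [same_i block_i]]; first by split; last exact: same_block.
have same_i1 : run_state A w (i.+1 * l) = run_state A sim (start i.+1).
  by rewrite mulSnr -last_state_block_summary block_i last_state_block_summary pumped_startS.
by split; last exact: same_block.
Qed.

Lemma real_cost_le i i' :
  i < i' -> seg_cost A w (i * l) (i'.+1 * l) <= l * (seg_cost A sim (start i.+1) (start i') + 2).
Proof.
move=> lt_ii'.
have homo_start : {homo start : m n / m <= n}.
  by move=> m n; rewrite (leq_pumped_start A f l_large size_real_block).
have middle : \sum_(i.+1 <= j < i') has_incr (block_summary A w (j * l) l) <=
              seg_cost A sim (start i.+1) (start i').
  apply: leq_trans (sum_incr_blocks_le_seg_cost _ _ _ _ homo_start).
  apply/eq_leq/eq_big_nat => j _.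
  by rewrite (real_sim_block_summary j).2 pumped_startS addKn.
apply: leq_trans (seg_cost_le_sum_incr_blocks A w l i i'.+1) _.
rewrite leq_mul2l (big_ltn (leqW lt_ii')) big_nat_recr //=.
have := leq_b1 (has_incr (block_summary A w (i * l) l)).
have := leq_b1 (has_incr (block_summary A w (i' * l) l)).
lia.
Qed.

Lemma real_pending_answered b N i m p :
  (forall n, N <= n -> cor_le A sim n b) -> N <= i -> i * l <= m < i * l + l ->
  pending (block_summary A w (i * l) l) = Some p ->
  Omega A (run_state A w m) <= Omega A p ->
  exists m', [/\ m < m', ~~ odd (Omega A (run_state A w m')),
                 Omega A (run_state A w m) < Omega A (run_state A w m')
               & seg_cost A w m m' <= l * (b + 2)].
Proof.
move=> sim_accepting le_Ni m_in pending_p le_mp.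
rewrite (real_sim_block_summary i).2 in pending_p.
have [n n_in [Om_n open_n]] := pending_block_summary_witness pending_p.
rewrite -pumped_startS in n_in open_n.
have le_Nn : N <= n by have := pumped_start_ge A f l_large size_real_block i; lia.
have [n' [i' [lt_ii' n'_in even_n' lt_Om cost_nn']]] :=
  open_request_answered_later (erefl : start 0 = 0)
    (pumped_start_lt A f l_large size_real_block) n_in open_n (sim_accepting n le_Nn).
rewrite pumped_startS in n'_in.
have [e max_e le_n'e] := max_even_block_summary_complete n'_in even_n'.
rewrite -(real_sim_block_summary i').2 in max_e.
have [m' m'_in [Om_m' even_e]] := max_even_block_summary_witness max_e.
have late_block : i.+1 * l <= i' * l by rewrite leq_mul2r lt_ii' orbT.
exists m'; split; rewrite ?Om_m' //; first by rewrite mulSnr in late_block; lia.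
  by apply: leq_ltn_trans le_mp _; rewrite -Om_n; apply: leq_trans le_n'e.
apply: leq_trans (leq_trans _ (real_cost_le lt_ii')) _.
  by apply: leq_seg_cost; rewrite ?mulSnr; lia.
rewrite leq_mul2l leq_add2r (leq_trans _ cost_nn') ?orbT //.
apply: leq_seg_cost; first lia.
  by rewrite (leq_pumped_start A f l_large size_real_block).
lia.
Qed.

Lemma block_strategy_accepted : lang A w.
Proof.
have l_pos := l_gt0 l_large.
have [b [N sim_accepting]] := simulated_play_accepted f_pos real_block tau_wins (input 0).
exists (l * (b + 2)), (N * l) => m le_Nm; rewrite /cor_le.
case: (boolP (odd (Omega A (run_state A w m)))) => [odd_m|]; last by left.
right; set i := m %/ l.
have m_in : i * l <= m < i * l + l.
  by rewrite /i {2 3}(divn_eq m l) leq_addr ltn_add2l ltn_pmod.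
have le_Ni : N <= i by rewrite /i leq_divRL.
case: (pending_block_summary_complete m_in odd_m) => [[m' [m'_in even_m' lt_Om]]|[p]].
  exists m'; split=> //; first by case/andP: m'_in.
  have : l <= l * (b + 2) by rewrite leq_pmulr // addn2.
  have := seg_cost_le_length A w m m'; lia.
exact: real_pending_answered sim_accepting le_Ni m_in.
Qed.

End BlockStrategy.

Theorem winsO_constant_delay (SI SO Q : finType) (A : pac Q (SI * SO)%type) f g l :
  delay_fun f -> winsO f (lang A) ->
  #|{set Q * summary Q}| <= l -> g 0 = 2 * l -> constant_delay g ->
  winsO g (lang A).
Proof.
move=> f_pos [tau tau_wins] l_large g0 g_const.
exists (block_strategy A f tau l) => u v size_u v_strategy w w_outcome.
exact: (block_strategy_accepted f_pos tau_wins l_large g0 g_const size_u v_strategy).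
Qed.

Lemma ncolors_ge2 (Sig Q : finType) (A : pac Q Sig) :
  has_even_and_odd_color A -> 1 < ncolors A.
Proof.
move=> [[q odd_q] [q' even_q']].
have neq_qq' : Omega A q != Omega A q' by apply: contraNneq even_q' => <-.
rewrite /ncolors (@uniq_leq_size _ [:: Omega A q; Omega A q']) //= ?inE ?neq_qq' //.
by move=> c; rewrite !inE mem_undup => /orP[] /eqP ->; apply: map_f; rewrite mem_enum.
Qed.

Theorem corollary2 (SI SO Q : finType) (A : pac Q (SI * SO)%type) :
  has_even_and_odd_color A ->
  (exists f, delay_fun f /\ winsO f (lang A)) ->
  forall g : nat -> nat,
    delay_fun g -> constant_delay g ->
    g 0 = 2 ^ (2 * nstates Q ^ 4 * ncolors A ^ 2 + 1) ->
    winsO g (lang A).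
Proof.
move=> colors [f [f_pos f_wins]] g _ g_const g0.
apply: (winsO_constant_delay f_pos f_wins _ _ g_const); last by rewrite g0 addn1 expnS.
rewrite card_profiles leq_exp2l // -/(nstates Q).
have k_ge2 := ncolors_ge2 colors.
have n_gt0 : 0 < nstates Q by apply/card_gt0P; exists (qI A).
have n1_le : (nstates Q).+1 <= nstates Q * ncolors A by nia.
have := leq_mul n1_le n1_le; nia.
Qed.
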